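(* Let $F\colon\mathsf{Ring}\to\mathsf{Set}$ be a contravariant functor whose restriction to the full subcategory $\mathsf{CommRing}$ of commutative rings is isomorphic to $\operatorname{Spec}$. If $R$ is any ring admitting a ring homomorphism $\mathbb{C}\to R$, then $F(\mathrm{M}_n(R))=\varnothing$ for every $n\geq 3$.
   Context: Rings are unital and ring homomorphisms preserve the identity. $\operatorname{Spec}$ is the contravariant functor on commutative rings sending a ring to its set of prime ideals and a homomorphism $f$ to $P\mapsto f^{-1}(P)$. $\mathrm{M}_n(R)$ is the ring of $n\times n$ matrices over $R$. *)

From HB Require Import structures.
From mathcomp Require Import all_boot all_order all_algebra.
From mathcomp Require Import complex.
From mathcomp Require Import Rstruct.
From Stdlib Require Import Reals.

Set Implicit Arguments.
Unset Strict Implicit.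
Unset Printing Implicit Defensive.

Import GRing.Theory.
Local Open Scope ring_scope.

Definition Cplx : fieldType := complex.complex R.

Definition prime_ideal (A : comPzRingType) (P : A -> Prop) : Prop :=
  [/\ P 0,
      (forall x y, P x -> P y -> P (x + y)),
      (forall a x, P x -> P (a * x)),
      ~ P 1
    & (forall x y, P (x * y) -> P x \/ P y)].

Definition Spec (A : comPzRingType) : Type := {P : A -> Prop | prime_ideal P}.

Lemma prime_ideal_preim (A B : comPzRingType) (f : {rmorphism A -> B})
  (P : B -> Prop) : prime_ideal P -> prime_ideal (fun x => P (f x)).
Proof.
case=> P0 PD PM P1 Pp; split.
- by rewrite rmorph0.
- by move=> x y Px Py; rewrite rmorphD; apply: PD.
- by move=> a x Px; rewrite rmorphM; apply: PM.
- by rewrite rmorph1.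
- by move=> x y; rewrite rmorphM; apply: Pp.
Qed.

Definition Spec_map (A B : comPzRingType) (f : {rmorphism A -> B})
  (P : Spec B) : Spec A :=
  exist _ (fun x => proj1_sig P (f x)) (prime_ideal_preim f (proj2_sig P)).

Record ring_cofunctor := RingCofunctor {
  fobj : pzRingType -> Type;
  fmap : forall (A B : pzRingType), {rmorphism A -> B} -> fobj B -> fobj A;
  fmap_id : forall (A : pzRingType) (f : {rmorphism A -> A}),
    (forall x, f x = x) -> forall y, fmap f y = y;
  fmap_comp : forall (A B C : pzRingType) (f : {rmorphism A -> B})
    (g : {rmorphism B -> C}) (h : {rmorphism A -> C}),
    (forall x, h x = g (f x)) -> forall z, fmap h z = fmap f (fmap g z)
}.

Definition restricts_to_Spec (F : ring_cofunctor) : Prop :=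
  exists phi : forall A : comPzRingType, fobj F A -> Spec A,
    (forall A : comPzRingType, bijective (phi A)) /\
    (forall (A B : comPzRingType) (f : {rmorphism A -> B}) (x : fobj F B),
        phi A (@fmap F A B f x) = Spec_map f (phi B x)).

From HB Require Import structures.
From mathcomp Require Import all_boot all_order all_algebra.
From mathcomp Require Import perm complex Rstruct.
From Stdlib Require Import ClassicalEpsilon.

(* A decomposition 1 = e_1 + ... + e_k of a ring A into orthogonal idempotents
   is a ring morphism Z^k -> A, so a point of F(A) yields a prime of Z^k, that is,
   it selects exactly one e_i.  Naturality along the coarsening Z^2 -> Z^k shows
   that whether e_i is selected depends on e_i alone: a point of F(A) is a
   Kochen-Specker valuation on the idempotents of A.  A point of F(M_n(R)) pulls
   back along Q -> C -> R to a point of F(M_n(Q)).  There, some coordinate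
   projection e_j is selected, and a configuration of 25 rational lines in a
   3-dimensional coordinate subspace through e_j admits no compatible
   {0,1}-colouring, which is checked by exhaustive search. *)

Set Implicit Arguments.
Unset Strict Implicit.
Unset Printing Implicit Defensive.

Import GRing.Theory.
Local Open Scope ring_scope.

Section Decompositions.
Variable A : pzRingType.

Definition orthogonal_idempotents k (e : 'I_k -> A) : Prop :=
  forall i j, e i * e j = if i == j then e i else 0.

Definition idempotent_decomposition k (e : 'I_k -> A) : Prop :=
  orthogonal_idempotents e /\ \sum_i e i = 1.

Definition complete_seq (s : seq A) : 'I_(size s).+1 -> A :=
  fun i => (rcons s (1 - \sum_(x <- s) x))`_i.
Arguments complete_seq : clear implicits.

Definition orthogonal_seq (s : seq A) : Prop :=
  forall i j, (i < size s)%N -> (j < size s)%N ->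
    s`_i * s`_j = if i == j then s`_i else 0.

Lemma idempotent_decomposition_complete (s : seq A) :
  orthogonal_seq s -> idempotent_decomposition (complete_seq s).
Proof.
move=> s_orth.
have sum_nth : \sum_(x <- s) x = \sum_(j < size s) s`_j by rewrite (big_nth 0) big_mkord.
have idem_sumr i : (i < size s)%N -> s`_i * \sum_(x <- s) x = s`_i.
  move=> lt_i; rewrite sum_nth mulr_sumr (bigD1 (Ordinal lt_i)) //= big1 ?addr0.
    by rewrite s_orth ?eqxx.
  by move=> j; rewrite -(inj_eq val_inj) eq_sym => /negbTE ne_ij; rewrite s_orth // ne_ij.
have idem_suml i : (i < size s)%N -> (\sum_(x <- s) x) * s`_i = s`_i.
  move=> lt_i; rewrite sum_nth mulr_suml (bigD1 (Ordinal lt_i)) //= big1 ?addr0.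
    by rewrite s_orth ?eqxx.
  by move=> j; rewrite -(inj_eq val_inj) => /negbTE ne_ji; rewrite s_orth // ne_ji.
have sum_idem : (\sum_(x <- s) x) * \sum_(x <- s) x = \sum_(x <- s) x.
  rewrite [X in X * _]sum_nth mulr_suml [RHS]sum_nth.
  by rewrite (eq_bigr (fun i : 'I_(size s) => s`_i)) // => i _; apply: idem_sumr.
split=> [i j|]; last first.
  rewrite big_ord_recr /= /complete_seq nth_rcons ltnn eqxx.
  rewrite (eq_bigr (fun i : 'I_(size s) => s`_i)) => [|i _]; last first.
    by rewrite nth_rcons /= ltn_ord.
  by rewrite -sum_nth addrC subrK.
rewrite /complete_seq !nth_rcons -(inj_eq val_inj) /=.
have := ltn_ord j; rewrite ltnS leq_eqVlt => /orP[/eqP-> | lt_j];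
  have := ltn_ord i; rewrite ltnS leq_eqVlt => /orP[/eqP-> | lt_i];
  rewrite ?ltnn ?eqxx ?lt_i ?lt_j //=.
- by rewrite mulrBl mul1r mulrBr mulr1 sum_idem subrr subr0.
- by rewrite (ltn_eqF lt_i) mulrBr mulr1 (idem_sumr _ lt_i) subrr.
- by rewrite (gtn_eqF lt_j) mulrBl mul1r (idem_suml _ lt_j) subrr.
- exact: s_orth.
Qed.

End Decompositions.
Arguments complete_seq {A} s.

Lemma prime_ideal_decomposition (A : comPzRingType) (P : A -> Prop) k (e : 'I_k -> A) :
  prime_ideal P -> idempotent_decomposition e -> exists! i, ~ P (e i).
Proof.
case=> P0 PD PM P1 Pprime [e_orth e_sum].
have [i Pi] : exists i, ~ P (e i).
  apply: NNPP => all_P; apply: P1; rewrite -e_sum.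
  by apply: (big_ind P) => // i _; apply: NNPP => Pi; apply: all_P; exists i.
exists i; split=> // j Pj; apply: NNPP => ne_ij.
have : P (e i * e j) by rewrite e_orth ifN //; apply/eqP.
by case/Pprime.
Qed.

Definition prodZ (k : nat) := {ffun 'I_k -> int}.
HB.instance Definition _ k := GRing.PzRing.on (prodZ k).
Fact prodZ_mulC k : commutative (@GRing.mul (prodZ k)).
Proof. by move=> a b; apply/ffunP=> i; rewrite !ffunE mulrC. Qed.
HB.instance Definition _ k :=
  GRing.PzRing_hasCommutativeMul.Build (prodZ k) (@prodZ_mulC k).

Definition coord_idem k (i : 'I_k) : prodZ k := [ffun j => (i == j)%:R].

Lemma coord_idem_decomposition k : idempotent_decomposition (@coord_idem k).
Proof.
split=> [i j|].
  case: eqVneq => [<-|ne_ij]; apply/ffunP=> l; rewrite !ffunE.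
    by case: (i == l); rewrite ?mulr1 ?mulr0.
  by case: eqVneq => [<-|]; rewrite ?mul0r // eq_sym (negbTE ne_ij) mulr0.
apply/ffunP=> l; rewrite sum_ffunE !ffunE (bigD1 l) //= ffunE eqxx big1 ?addr0 //.
by move=> i ne_il; rewrite ffunE (negbTE ne_il).
Qed.

Section DecompositionMorphism.
Variables (A : pzRingType) (k : nat) (e : 'I_k -> A).
Hypothesis e_dec : idempotent_decomposition e.

Definition decomposition_map (a : prodZ k) : A := \sum_i e i *~ a i.

Fact decomposition_map_is_nmod_morphism : nmod_morphism decomposition_map.
Proof.
split=> [|a b]; rewrite /decomposition_map.
  by rewrite big1 // => i _; rewrite ffunE mulr0z.
by rewrite -big_split; apply: eq_bigr => i _; rewrite ffunE mulrzDr.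
Qed.

Fact decomposition_map_is_monoid_morphism : monoid_morphism decomposition_map.
Proof.
case: e_dec => e_orth e_sum; split=> [|a b]; rewrite /decomposition_map.
  by rewrite -e_sum; apply: eq_bigr => i _; rewrite ffunE.
rewrite mulr_suml; apply: eq_bigr => i _.
rewrite mulr_sumr (bigD1 i) //= big1 ?addr0 => [|j ne_ji].
  by rewrite mulrzAl mulrzAr e_orth eqxx -mulrzA ffunE mulrC.
by rewrite mulrzAl mulrzAr e_orth eq_sym (negbTE ne_ji) !mul0rz.
Qed.

Definition decomposition_rmorphism : {rmorphism prodZ k -> A} :=
  HB.pack decomposition_map
    (GRing.isNmodMorphism.Build _ _ _ decomposition_map_is_nmod_morphism)
    (GRing.isMonoidMorphism.Build _ _ _ decomposition_map_is_monoid_morphism).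

End DecompositionMorphism.

Lemma orthogonal_seq1 (A : pzRingType) (E : A) : E * E = E -> orthogonal_seq [:: E].
Proof. by move=> E_idem [|i] [|j] //= _ _; rewrite E_idem. Qed.

Definition coarsen_map k (i : 'I_k) (a : prodZ 2) : prodZ k :=
  [ffun j => if j == i then a ord0 else a ord_max].

Fact coarsen_map_is_nmod_morphism k (i : 'I_k) : nmod_morphism (coarsen_map i).
Proof.
split=> [|a b]; apply/ffunP=> j; rewrite !ffunE; case: ifP => _ //.
Qed.

Fact coarsen_map_is_monoid_morphism k (i : 'I_k) : monoid_morphism (coarsen_map i).
Proof.
split=> [|a b]; apply/ffunP=> j; rewrite !ffunE; case: ifP => _ //.
Qed.

Definition coarsen_rmorphism k (i : 'I_k) : {rmorphism prodZ 2 -> prodZ k} :=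
  HB.pack (coarsen_map i)
    (GRing.isNmodMorphism.Build _ _ _ (coarsen_map_is_nmod_morphism i))
    (GRing.isMonoidMorphism.Build _ _ _ (coarsen_map_is_monoid_morphism i)).

Lemma decomposition_map_coarsen (A : pzRingType) k (e : 'I_k -> A) i a :
  \sum_j e j = 1 ->
  decomposition_map (complete_seq [:: e i]) a = decomposition_map e (coarsen_map i a).
Proof.
move=> e_sum; rewrite /decomposition_map big_ord_recr big_ord1 /complete_seq /= big_seq1.
rewrite (bigD1 i) //= ffunE eqxx; congr (_ + _).
  by congr (_ *~ a _); apply: val_inj.
have -> : 1 - e i = \sum_(j | j != i) e j by rewrite -e_sum (bigD1 i) //= addrC addrK.
by rewrite mulrz_suml; apply: eq_bigr => j ne_ji; rewrite ffunE (negbTE ne_ji).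
Qed.

Lemma coarsen_coord_idem k (i : 'I_k) : coarsen_map i (coord_idem ord0) = coord_idem i.
Proof. by apply/ffunP=> j; rewrite !ffunE [i == j]eq_sym; case: (j == i). Qed.

Definition KS_valuation (A : pzRingType) (v : A -> Prop) : Prop :=
  forall k (e : 'I_k -> A), idempotent_decomposition e -> exists! i, v (e i).

Section PointValuation.
Variables (F : ring_cofunctor) (phi : forall A : comPzRingType, fobj F A -> Spec A).
Hypothesis phi_natural :
  forall (A B : comPzRingType) (f : {rmorphism A -> B}) (x : fobj F B),
    phi (fmap f x) = Spec_map f (phi x).
Variables (A : pzRingType) (y : fobj F A).

Definition selects k (e : 'I_k -> A) (e_dec : idempotent_decomposition e) i : Prop :=
  ~ sval (phi (fmap (decomposition_rmorphism e_dec) y)) (coord_idem i).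

Lemma selects_unique k (e : 'I_k -> A) (e_dec : idempotent_decomposition e) :
  exists! i, selects e_dec i.
Proof.
exact: prime_ideal_decomposition (svalP _) (coord_idem_decomposition k).
Qed.

Lemma selects_coarsen k (e : 'I_k -> A) (e_dec : idempotent_decomposition e) i
    (pair_dec : idempotent_decomposition (complete_seq [:: e i])) :
  selects pair_dec ord0 <-> selects e_dec i.
Proof.
have factor a : decomposition_rmorphism pair_dec a =
    decomposition_rmorphism e_dec (coarsen_rmorphism i a).
  exact: decomposition_map_coarsen (proj2 e_dec).
rewrite /selects (fmap_comp factor) phi_natural /=.
by rewrite coarsen_coord_idem.
Qed.

(* Vacuously true when E is not idempotent; only idempotents are ever evaluated. *)
Definition point_value (E : A) : Prop :=
  forall pair_dec : idempotent_decomposition (complete_seq [:: E]),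
    selects pair_dec ord0.

Lemma selects_point_value k (e : 'I_k -> A) (e_dec : idempotent_decomposition e) i :
  selects e_dec i <-> point_value (e i).
Proof.
split=> [sel pair_dec | val]; first exact/(selects_coarsen e_dec).
apply/(selects_coarsen e_dec _)/val.
by apply/idempotent_decomposition_complete/orthogonal_seq1; rewrite (proj1 e_dec) eqxx.
Qed.

Lemma point_value_KS : KS_valuation point_value.
Proof.
move=> k e e_dec; have [i [sel_i uniq_i]] := selects_unique e_dec.
exists i; split=> [|j]; first exact/selects_point_value.
by move/(selects_point_value e_dec)/uniq_i.
Qed.

End PointValuation.

(* Integer representatives of 25 lines in Q^3, the orthogonal bases they form
   (as index triples) and further orthogonal pairs. *)
Definition ks_vectors : seq (int * int * int) := [:: (1, 0, 0); (0, 0, 1); (0, 1, 0); (0, 1, (-1)); (0, 1, 1); (1, (-1), (-1)); (2, 1, 1); (1, 0, (-2)); (2, 0, 1); (1, 0, 1); (1, 0, (-1)); (1, (-1), 1); (2, 1, (-1)); (1, 1, 0); (1, (-1), (-2)); (1, (-1), 0); (1, (-1), 2); (1, 1, (-1)); (2, (-1), 1); (1, 1, 2); (1, 1, 1); (1, 1, (-2)); (2, (-1), (-1)); (1, 0, 2); (2, 0, (-1))].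
Definition ks_bases : seq (nat * nat * nat) := [:: (0, 3, 4); (0, 1, 2); (1, 15, 13); (3, 5, 6); (3, 20, 22); (2, 7, 8); (2, 10, 9); (2, 23, 24); (4, 11, 12); (4, 17, 18); (14, 11, 13); (5, 16, 13); (15, 21, 20); (15, 17, 19)].
Definition ks_pairs : seq (nat * nat) := [:: (1, 2); (1, 15); (1, 0); (1, 13); (3, 4); (3, 5); (3, 0); (3, 20); (3, 22); (3, 6); (2, 7); (2, 10); (2, 0); (2, 9); (2, 23); (2, 24); (2, 8); (4, 11); (4, 0); (4, 17); (4, 18); (4, 12); (14, 11); (14, 13); (14, 8); (5, 16); (5, 9); (5, 13); (5, 6); (15, 21); (15, 17); (15, 13); (15, 20); (15, 19); (11, 10); (11, 13); (11, 12); (16, 13); (16, 24); (7, 18); (7, 8); (7, 6); (10, 9); (10, 20); (9, 17); (23, 22); (23, 24); (23, 12); (21, 20); (21, 8); (17, 19); (17, 18); (20, 22); (19, 24)].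

Definition ks_colouring (b : nat -> bool) : bool :=
  all (fun t => b t.1.1 + b t.1.2 + b t.2 == 1)%N ks_bases &&
  all (fun p => ~~ (b p.1 && b p.2)) ks_pairs.

Definition lookup (a : seq bool) (i : nat) : option bool :=
  if (i < size a)%N then Some (nth false a i) else None.

Definition violates_basis (a : seq bool) (t : nat * nat * nat) : bool :=
  let l := [:: lookup a t.1.1; lookup a t.1.2; lookup a t.2] in
  (1 < count (pred1 (Some true)) l)%N || (count (pred1 (Some false)) l == 3)%N.

Definition violates_pair (a : seq bool) (p : nat * nat) : bool :=
  (lookup a p.1 == Some true) && (lookup a p.2 == Some true).

Definition violates (a : seq bool) : bool :=
  has (violates_basis a) ks_bases || has (violates_pair a) ks_pairs.

Fixpoint refutes (fuel : nat) (a : seq bool) : bool :=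
  if violates a then true else
  if fuel is fuel'.+1 then refutes fuel' (rcons a true) && refutes fuel' (rcons a false)
  else false.

Definition prefix (b : nat -> bool) (k : nat) : seq bool := mkseq b k.

Lemma lookup_prefix b k i : lookup (prefix b k) i = if (i < k)%N then Some (b i) else None.
Proof. by rewrite /lookup size_mkseq; case: ltnP => // lt_ik; rewrite nth_mkseq. Qed.

Lemma colouring_not_violates b k : ks_colouring b -> violates (prefix b k) = false.
Proof.
case/andP=> /allP bases_ok /allP pairs_ok; apply/negbTE; rewrite negb_or.
apply/andP; split; apply/hasPn.
  move=> [[x y] z] /bases_ok /=; rewrite /violates_basis !lookup_prefix /=.
  by case: (x < k)%N; case: (y < k)%N; case: (z < k)%N; case: (b x); case: (b y); case: (b z).
move=> [x y] /pairs_ok; rewrite /violates_pair !lookup_prefix /=.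
by case: (x < k)%N; case: (y < k)%N; case: (b x); case: (b y).
Qed.

Lemma refutes_prefix b fuel k : ks_colouring b -> ~~ refutes fuel (prefix b k).
Proof.
move=> b_col; elim: fuel k => [|fuel IH] k /=; rewrite colouring_not_violates //=.
have := IH k.+1; rewrite /prefix mkseqS -/(prefix b k).
by case: (b k) => not_ref; rewrite negb_and not_ref ?orbT.
Qed.

Lemma refutes_first_true : refutes 25 [:: true].
Proof. by vm_compute. Qed.

Lemma no_ks_colouring (b : nat -> bool) : b 0%N -> ~~ ks_colouring b.
Proof.
move=> b0; apply/negP => b_col; have := refutes_prefix 25 1 b_col.
have -> : prefix b 1 = [:: true] by rewrite /prefix /mkseq /= b0.
by rewrite refutes_first_true.
Qed.

Section Embedding.
Variables (K : pzRingType) (m n : nat) (s : 'I_m -> 'I_n).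
Hypothesis s_inj : injective s.

Definition embedding_mx : 'M[K]_(n, m) := \matrix_(a, i) (a == s i)%:R.

Lemma embedding_mx_isometry : embedding_mx^T *m embedding_mx = 1%:M.
Proof.
apply/matrixP=> i l; rewrite !mxE (bigD1 (s i)) //= big1 => [|a ne_a].
  by rewrite !mxE eqxx mul1r addr0 (inj_eq s_inj).
by rewrite !mxE (negbTE ne_a) mul0r.
Qed.

Lemma embedding_mx_delta i : embedding_mx *m delta_mx i 0 = delta_mx (s i) (0 : 'I_1).
Proof.
apply/matrixP=> a z; rewrite [z]ord1 !mxE (bigD1 i) //= big1 => [|d ne_di];
  rewrite /embedding_mx !mxE.
  by rewrite !eqxx !andbT mulr1 addr0.
by rewrite (negbTE ne_di) mulr0.
Qed.

Lemma delta_embedding_mxT j : delta_mx 0 j *m embedding_mx^T = delta_mx (0 : 'I_1) (s j).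
Proof.
apply/matrixP=> z b; rewrite [z]ord1 !mxE (bigD1 j) //= big1 => [|d ne_dj];
  rewrite /embedding_mx !mxE.
  by rewrite !eqxx mul1r addr0.
by rewrite (negbTE ne_dj) andbF mul0r.
Qed.

Definition embed_mx (Y : 'M[K]_m) : 'M[K]_n := embedding_mx *m Y *m embedding_mx^T.

Lemma embed_mxM Y Z : embed_mx (Y * Z) = embed_mx Y * embed_mx Z.
Proof.
change (embed_mx (Y *m Z) = embed_mx Y *m embed_mx Z); rewrite /embed_mx !mulmxA.
by rewrite -[_ *m embedding_mx^T *m embedding_mx]mulmxA embedding_mx_isometry mulmx1.
Qed.

Lemma embed_mxD Y Z : embed_mx (Y + Z) = embed_mx Y + embed_mx Z.
Proof. by rewrite /embed_mx mulmxDr mulmxDl. Qed.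

Lemma embed_mx0 : embed_mx 0 = 0.
Proof. by rewrite /embed_mx mulmx0 mul0mx. Qed.

Lemma embed_mx_delta i j : embed_mx (delta_mx i j) = delta_mx (s i) (s j).
Proof.
rewrite /embed_mx -(mul_delta_mx (0 : 'I_1) i j).
by rewrite mulmxA embedding_mx_delta -mulmxA delta_embedding_mxT mul_delta_mx.
Qed.

Lemma orthogonal_seq_embed (S : seq 'M[K]_m) :
  orthogonal_seq S -> orthogonal_seq (map embed_mx S).
Proof.
move=> S_orth i j; rewrite size_map => lt_i lt_j.
rewrite !(nth_map 0) // -embed_mxM S_orth //.
by case: eqP => _; rewrite ?embed_mx0.
Qed.

End Embedding.

Definition mx3 (f : nat -> nat -> rat) : 'M[rat]_3 := \matrix_(a < 3, b < 3) f a b.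

Definition mul3 (f g : nat -> nat -> rat) (a b : nat) : rat :=
  f a 0%N * g 0%N b + f a 1%N * g 1%N b + f a 2%N * g 2%N b.

Definition all3 (P : nat -> nat -> bool) : bool :=
  all (fun a => all (P a) (iota 0 3)) (iota 0 3).

Lemma mx3M f g : mx3 f *m mx3 g = mx3 (mul3 f g).
Proof.
apply/matrixP=> a b; rewrite !mxE !big_ord_recl big_ord0 !mxE addr0 /mul3 /=.
by rewrite addrA.
Qed.

Lemma mx3D f g : mx3 f + mx3 g = mx3 (fun a b => f a b + g a b).
Proof. by apply/matrixP=> a b; rewrite !mxE. Qed.

Lemma eq_mx3 f g : all3 (fun a b => f a b == g a b) -> mx3 f = mx3 g.
Proof.
move=> /allP fg; apply/matrixP=> a b; rewrite !mxE.
have /fg /allP ab : (a : nat) \in iota 0 3 by rewrite mem_iota ltn_ord.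
by apply/eqP/ab; rewrite mem_iota ltn_ord.
Qed.

Definition coord3 (u : int * int * int) (a : nat) : int :=
  match a with 0 => u.1.1 | 1 => u.1.2 | _ => u.2 end%N.

Definition proj_fun (u : int * int * int) (a b : nat) : rat :=
  (coord3 u a * coord3 u b)%:~R / (u.1.1 ^+ 2 + u.1.2 ^+ 2 + u.2 ^+ 2)%:~R.

Definition ks_proj_fun (x : nat) : nat -> nat -> rat :=
  proj_fun (nth (0, 0, 0) ks_vectors x).

Definition ks_proj (x : nat) : 'M[rat]_3 := mx3 (ks_proj_fun x).

Definition ks_orthogonalb (xs : seq nat) : bool :=
  all (fun i => all (fun j => all3 (fun a b =>
      mul3 (ks_proj_fun (nth 0%N xs i)) (ks_proj_fun (nth 0%N xs j)) a b
        == if i == j then ks_proj_fun (nth 0%N xs i) a b else 0))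
    (iota 0 (size xs))) (iota 0 (size xs)).

Lemma orthogonal_seq_ks_proj xs : ks_orthogonalb xs -> orthogonal_seq (map ks_proj xs).
Proof.
move=> /allP xs_orth i j; rewrite size_map => lt_i lt_j.
have /xs_orth /allP /(_ j) ij : i \in iota 0 (size xs) by rewrite mem_iota.
rewrite !(nth_map 0%N) //; change (ks_proj (nth 0%N xs i) *m ks_proj (nth 0%N xs j) =
  if i == j then ks_proj (nth 0%N xs i) else 0).
rewrite mx3M; case: eqP ij => _ /(_ _)/eq_mx3 -> //; rewrite ?mem_iota //.
by apply/matrixP=> a b; rewrite !mxE.
Qed.

Lemma ks_bases_orthogonal :
  all (fun t => ks_orthogonalb [:: t.1.1; t.1.2; t.2]) ks_bases.
Proof. by vm_compute. Qed.

Lemma ks_pairs_orthogonal : all (fun p => ks_orthogonalb [:: p.1; p.2]) ks_pairs.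
Proof. by vm_compute. Qed.

Lemma ks_bases_sum t : t \in ks_bases -> ks_proj t.1.1 + ks_proj t.1.2 + ks_proj t.2 = 1.
Proof.
have /allP sums : all (fun t => all3 (fun a b =>
    ks_proj_fun t.1.1 a b + ks_proj_fun t.1.2 a b + ks_proj_fun t.2 a b
      == (a == b)%:R)) ks_bases by vm_compute.
move=> /sums sum_t; rewrite /ks_proj !mx3D (eq_mx3 sum_t).
by apply/matrixP=> a b; rewrite !mxE.
Qed.

Lemma ks_proj0 : ks_proj 0 = delta_mx 0 0.
Proof.
have -> : ks_proj 0 = mx3 (fun a b => ((a == 0%N) && (b == 0%N))%:R).
  by apply: eq_mx3; vm_compute.
by apply/matrixP=> a b; rewrite !mxE.
Qed.

Definition asbool (P : Prop) : bool :=
  if excluded_middle_informative P then true else false.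

Lemma asboolP (P : Prop) : reflect P (asbool P).
Proof. by rewrite /asbool; case: excluded_middle_informative => p; constructor. Qed.

Lemma exists_unique_asbool_sum k (P : 'I_k -> Prop) :
  (exists! i, P i) -> (\sum_i asbool (P i) = 1)%N.
Proof.
case=> i [Pi uniq_i]; rewrite (bigD1 i) //= big1 => [|j ne_ji].
  by case: asboolP.
by case: asboolP => // /uniq_i eq_ij; rewrite eq_ij eqxx in ne_ji.
Qed.

Lemma coord_mx_decomposition (K : pzRingType) n :
  idempotent_decomposition (fun i : 'I_n => delta_mx i i : 'M[K]_n).
Proof.
split=> [i j|].
  by rewrite [LHS]mul_delta_mx_cond;
     case: eqVneq => [->|_]; rewrite ?mulr1n ?mulr0n.
apply/matrixP=> a b; change ((\sum_i (delta_mx i i : 'M[K]_n)) a b = (1%:M : 'M[K]_n) a b).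
rewrite summxE !mxE (bigD1 a) //= big1 => [|i ne_ia].
  by rewrite !mxE eqxx addr0 eq_sym.
by rewrite !mxE eq_sym (negbTE ne_ia).
Qed.

Definition swap3 n (n3 : (3 <= n)%N) (j : 'I_n) (i : 'I_3) : 'I_n :=
  tperm (widen_ord n3 ord0) j (widen_ord n3 i).

Lemma swap3_inj n (n3 : (3 <= n)%N) j : injective (swap3 n3 j).
Proof. by move=> a b /perm_inj /(congr1 val) eq_ab; apply: val_inj. Qed.

Lemma swap3_0 n (n3 : (3 <= n)%N) j : swap3 n3 j ord0 = j.
Proof. exact: tpermL. Qed.

Theorem no_KS_valuation_mx n (v : 'M[rat]_n -> Prop) : (3 <= n)%N -> ~ KS_valuation v.
Proof.
move=> n3 v_KS.
have [j [vj _]] := v_KS _ _ (coord_mx_decomposition rat n).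
pose P x := embed_mx (swap3 n3 j) (ks_proj x).
(* The complement of the 3-dimensional subspace: it completes every basis. *)
pose Q : 'M[rat]_n := 1 - embed_mx (swap3 n3 j) 1.
pose b x := asbool (v (P x)).
have b0 : b 0%N by apply/asboolP; rewrite /P ks_proj0 embed_mx_delta swap3_0.
have value_sum xs : ks_orthogonalb xs ->
    (\sum_i asbool (v (complete_seq (map P xs) i)) = 1)%N.
  move=> xs_orth; apply/exists_unique_asbool_sum/v_KS/idempotent_decomposition_complete.
  rewrite (map_comp (embed_mx (swap3 n3 j)) ks_proj).
  exact/(orthogonal_seq_embed (@swap3_inj n n3 j))/orthogonal_seq_ks_proj.
have basis_sum t : t \in ks_bases -> (b t.1.1 + b t.1.2 + b t.2 + asbool (v Q))%N = 1%N.
  move=> t_basis; have := value_sum _ (allP ks_bases_orthogonal t t_basis).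
  rewrite !big_ord_recl big_ord0 /complete_seq /= !big_cons big_nil addr0.
  by rewrite -!embed_mxD addrA ks_bases_sum // addn0 !addnA.
have Q_false : ~~ asbool (v Q).
  have := basis_sum _ (mem_head _ _); rewrite b0 /=.
  by case: (b 3%N); case: (b 4%N); case: (asbool (v Q)).
apply: (negP (no_ks_colouring b0)); apply/andP; split; apply/allP.
  by move=> t /basis_sum; rewrite (negbTE Q_false) addn0 => ->.
move=> p p_pair; have := value_sum _ (allP ks_pairs_orthogonal p p_pair).
rewrite !big_ord_recl big_ord0 /complete_seq /= -/(b p.1) -/(b p.2).
by case: (b p.1); case: (b p.2); case: (asbool _).
Qed.

Theorem corollary4p1 (F : ring_cofunctor) :
  restricts_to_Spec F ->
  forall (R : pzRingType), {rmorphism Cplx -> R} ->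
  forall n : nat, (3 <= n)%N -> fobj F 'M[R]_n -> False.
Proof.
move=> [phi [_ phi_natural]] R f n n3 x.
pose ratC : {rmorphism rat -> Cplx} := @ratr (complex Rdefinitions.R).
pose y : fobj F 'M[rat]_n := fmap (map_mx ratC) (fmap (map_mx f) x).
exact: no_KS_valuation_mx n3 (point_value_KS phi_natural y).
Qed.
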